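(* Let $(G,K)=(G_2,SU(3))$. For $X,Y\in\mathfrak g$, both $[\phi(X),\phi(Y)]=0$ and $[X_{\mathfrak k},Y_{\mathfrak k}]=0$ hold if and only if both $[X,Y]=0$ and $[X_{\mathfrak p},Y_{\mathfrak p}]=0$ hold.
   Context: $G_2=\operatorname{Aut}(\mathbb{O})\subseteq SO(7)$ is the automorphism group of the octonions acting on $\operatorname{Im}\mathbb{O}$, and $K=\{g\in G_2: g(i)=i\}\cong SU(3)$ for a fixed unit imaginary octonion $i$. Let $\mathfrak g$, $\mathfrak k$ be their Lie algebras, $\langle X,Y\rangle_0=-\operatorname{tr}(XY)$, $\mathfrak p$ the $\langle\cdot,\cdot\rangle_0$-orthogonal complement of $\mathfrak k$ in $\mathfrak g$, and $X=X_{\mathfrak k}+X_{\mathfrak p}$. Fix $t>0$ and set $\phi(Y)=\frac{t}{t+1}Y_{\mathfrak k}+Y_{\mathfrak p}$. *)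

From HB Require Import structures.
From mathcomp Require Import all_boot all_order all_algebra.
Set Implicit Arguments. Unset Strict Implicit. Unset Printing Implicit Defensive.
Import Order.TTheory GRing.Theory Num.Theory.
Local Open Scope ring_scope.

(* Imaginary octonions Im O = R^7 with basis e_1..e_7 indexed by 'I_7
   (index m stands for e_{m+1}).  Multiplication convention (Fano plane):
   e_a e_{a+1} = e_{a+3} (indices mod 7), i.e. the oriented triples are the
   cyclic shifts of (0,1,3).  octo_eps i j k is the structure constant
   e_i e_j = sum_k eps i j k e_k  for i <> j. *)
Definition octo_eps (R : nzRingType) (i j k : 'I_7) : R :=
  let d1 := ((j + 7 - i) %% 7)%N in
  let d2 := ((k + 7 - i) %% 7)%N in
  if ((d1, d2) \in [:: (1, 3); (2, 6); (4, 5)]%N) then 1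
  else if ((d1, d2) \in [:: (3, 1); (6, 2); (5, 4)]%N) then -1
  else 0.

Definition idot (R : nzRingType) (u v : 'cV[R]_7) : R := \sum_i u i 0 * v i 0.

Definition icross (R : nzRingType) (u v : 'cV[R]_7) : 'cV[R]_7 :=
  \col_k \sum_i \sum_j octo_eps R i j k * u i 0 * v j 0.

Definition octo (R : nzRingType) := (R * 'cV[R]_7)%type.

Definition oadd (R : nzRingType) (x y : octo R) : octo R := (x.1 + y.1, x.2 + y.2).

Definition omul (R : nzRingType) (x y : octo R) : octo R :=
  (x.1 * y.1 - idot x.2 y.2, x.1 *: y.2 + y.1 *: x.2 + icross x.2 y.2).

Definition is_derivation (R : nzRingType) (D : octo R -> octo R) : Prop :=
  forall x y, D (omul x y) = oadd (omul (D x) y) (omul x (D y)).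

(* g = Lie algebra of G_2 = Aut(O), realised on Im O: the X : Im O -> Im O
   whose extension by 0 on the real line is a derivation of O. *)
Definition in_g2 (R : nzRingType) (X : 'M[R]_7) : Prop :=
  is_derivation (fun x : octo R => (0, X *m x.2)).

(* k = Lie algebra of K = Stab_{G_2}(i). *)
Definition in_k (R : nzRingType) (i : 'cV[R]_7) (X : 'M[R]_7) : Prop :=
  in_g2 X /\ X *m i = 0.

Definition ip0 (R : nzRingType) (X Y : 'M[R]_7) : R := - \tr (X *m Y).

Definition in_p (R : nzRingType) (i : 'cV[R]_7) (X : 'M[R]_7) : Prop :=
  in_g2 X /\ forall Z, in_k i Z -> ip0 X Z = 0.

Definition kp_decomp (R : nzRingType) (i : 'cV[R]_7) (X Xk Xp : 'M[R]_7) : Prop :=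
  X = Xk + Xp /\ in_k i Xk /\ in_p i Xp.

Definition lie (R : nzRingType) (X Y : 'M[R]_7) : 'M[R]_7 := X *m Y - Y *m X.

Definition phi (R : fieldType) (t : R) (Yk Yp : 'M[R]_7) : 'M[R]_7 :=
  (t / (t + 1)) *: Yk + Yp.

From HB Require Import structures.
From mathcomp Require Import all_boot all_order all_algebra.
From mathcomp Require Import ring lra.
Import Order.TTheory GRing.Theory Num.Theory.
Set Implicit Arguments.
Unset Strict Implicit.
Local Open Scope ring_scope.

(* S^6 = G_2/SU(3) is not a symmetric space: [p, p] is not contained in k.
   What survives is that [p, p] meets p only in 0.  With s = t/(t+1) and
   M = [X_k, Y_p] + [X_p, Y_k], which lies in p since [k, p] <= p,
     [X, Y] = [X_k, Y_k] + M + [X_p, Y_p],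
     [phi X, phi Y] = s^2 [X_k, Y_k] + s M + [X_p, Y_p].
   If [X_k, Y_k] = [phi X, phi Y] = 0, then [X_p, Y_p] = - s M lies in p, so it
   vanishes, and then M = 0.  If [X_p, Y_p] = [X, Y] = 0, then [X_k, Y_k] = - M
   lies in k ∩ p = 0.
   For [p, p] ∩ p = 0: for a unit vector i, every U in p is the derivation
   (1/2) D_{i,a} with a = U i orthogonal to i.  If U, V and [U, V] lie in p,
   evaluating <[U, V] a, b> once from the formulas for U and V and once from
   [U, V] = (1/2) D_{i, i x (a x b)} forces a x b = 0.  That (1/2) D_{i,a} is
   orthogonal to k comes down to tr(L_x Z) = 0 for Z in g_2, i.e. to the seven
   linear relations that cut g_2 out of so(7). *)

Lemma big_ord7 (V : nmodType) (F : 'I_7 -> V) : \sum_i F i =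
  F (inord 0) + F (inord 1) + F (inord 2) + F (inord 3) + F (inord 4) + F (inord 5) + F (inord 6).
Proof.
rewrite !big_ord_recr big_ord0 /= add0r.
by repeat congr (_ + _); congr F; apply: val_inj; rewrite /= inordK.
Qed.

Section Coordinates.
Variable R : comNzRingType.
Implicit Types (u v w x y z : 'cV[R]_7) (Z : 'M[R]_7).

Definition coord u (n : nat) : R := u (inord n) 0.
Definition entry Z (r s : nat) : R := Z (inord r) (inord s).

Record vec7 := Vec7 { x0 : R; x1 : R; x2 : R; x3 : R; x4 : R; x5 : R; x6 : R }.

Definition coords u := Vec7 (coord u 0) (coord u 1) (coord u 2) (coord u 3)
  (coord u 4) (coord u 5) (coord u 6).

Definition add7 (p q : vec7) :=
  let: Vec7 p0 p1 p2 p3 p4 p5 p6 := p in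
  let: Vec7 q0 q1 q2 q3 q4 q5 q6 := q in
  Vec7 (p0 + q0) (p1 + q1) (p2 + q2) (p3 + q3) (p4 + q4) (p5 + q5) (p6 + q6).
Definition scale7 (a : R) (p : vec7) :=
  let: Vec7 p0 p1 p2 p3 p4 p5 p6 := p in
  Vec7 (a * p0) (a * p1) (a * p2) (a * p3) (a * p4) (a * p5) (a * p6).
Definition dot7 (p q : vec7) :=
  let: Vec7 p0 p1 p2 p3 p4 p5 p6 := p in
  let: Vec7 q0 q1 q2 q3 q4 q5 q6 := q in
  p0 * q0 + p1 * q1 + p2 * q2 + p3 * q3 + p4 * q4 + p5 * q5 + p6 * q6.

Definition cross7 (p q : vec7) :=
  let: Vec7 p0 p1 p2 p3 p4 p5 p6 := p in
  let: Vec7 q0 q1 q2 q3 q4 q5 q6 := q in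
  Vec7 (p1 * q3 - p3 * q1 + p2 * q6 - p6 * q2 + p4 * q5 - p5 * q4)
       (p2 * q4 - p4 * q2 + p3 * q0 - p0 * q3 + p5 * q6 - p6 * q5)
       (p3 * q5 - p5 * q3 + p4 * q1 - p1 * q4 + p6 * q0 - p0 * q6)
       (p4 * q6 - p6 * q4 + p5 * q2 - p2 * q5 + p0 * q1 - p1 * q0)
       (p5 * q0 - p0 * q5 + p6 * q3 - p3 * q6 + p1 * q2 - p2 * q1)
       (p6 * q1 - p1 * q6 + p0 * q4 - p4 * q0 + p2 * q3 - p3 * q2)
       (p0 * q2 - p2 * q0 + p1 * q5 - p5 * q1 + p3 * q4 - p4 * q3).

Lemma coords_inj : injective coords.
Proof.
move=> u v [e0 e1 e2 e3 e4 e5 e6]; apply/matrixP => r c; rewrite [c]ord1.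
rewrite -[r]inord_val; case: r => [[|[|[|[|[|[|[|]]]]]]]] //.
Qed.

Lemma coords0 : coords 0 = Vec7 0 0 0 0 0 0 0.
Proof. by rewrite /coords /coord !mxE. Qed.

Lemma coordsD u v : coords (u + v) = add7 (coords u) (coords v).
Proof. by rewrite /coords /coord !mxE. Qed.

Lemma coordsZ a u : coords (a *: u) = scale7 a (coords u).
Proof. by rewrite /coords /coord !mxE. Qed.

Lemma coordsN u : coords (- u) = scale7 (-1) (coords u).
Proof. by rewrite -scaleN1r coordsZ. Qed.

Lemma idot_coords u v : idot u v = dot7 (coords u) (coords v).
Proof. by rewrite /idot big_ord7. Qed.

Lemma coords_mul_delta Z s : coords (Z *m delta_mx (inord s) 0) =
  Vec7 (entry Z 0 s) (entry Z 1 s) (entry Z 2 s) (entry Z 3 s)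
    (entry Z 4 s) (entry Z 5 s) (entry Z 6 s).
Proof. by rewrite /coords /coord -colE !mxE. Qed.

Lemma coords_icross u v : coords (icross u v) = cross7 (coords u) (coords v).
Proof.
rewrite /coords /coord /icross !mxE !big_ord7 /octo_eps !inordK //=.
by congr Vec7; ring.
Qed.

Lemma coord_delta n p : (n < 7)%N -> (p < 7)%N ->
  coord (delta_mx (inord p) 0) n = if n == p then 1 else 0.
Proof.
move=> ltn ltp; rewrite /coord mxE eqxx andbT.
by rewrite -(inj_eq val_inj) /= !inordK //; case: (n == p).
Qed.

Lemma mxtrace_coords (M : 'M[R]_7) : \tr M =
  x0 (coords (M *m delta_mx (inord 0) 0)) + x1 (coords (M *m delta_mx (inord 1) 0))
  + x2 (coords (M *m delta_mx (inord 2) 0)) + x3 (coords (M *m delta_mx (inord 3) 0))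
  + x4 (coords (M *m delta_mx (inord 4) 0)) + x5 (coords (M *m delta_mx (inord 5) 0))
  + x6 (coords (M *m delta_mx (inord 6) 0)).
Proof. by rewrite /mxtrace big_ord7 /= /coord -!colE !mxE. Qed.

End Coordinates.

(* Identities in Im O are proved in coordinates: the goal is pushed through
   [coords], each remaining [coords u] is generalized to seven scalars, and
   [ring], [field] or [lra] closes the components.  [coords_linear] keeps cross
   products opaque, which is much cheaper when only linearity is involved. *)
Ltac coords_generalize :=
  repeat match goal with |- context [coords ?u] => move: (coords u) => [? ? ? ? ? ? ?] end;
  rewrite /=; try congr Vec7.

Ltac coords_linear :=
  rewrite ?idot_coords; try apply: coords_inj;
  rewrite ?(coords0, coordsD, coordsN, coordsZ); coords_generalize.

Ltac coords_expand :=
  rewrite ?idot_coords; try apply: coords_inj;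
  rewrite ?(coords0, coordsD, coordsN, coordsZ, coords_icross, coords_mul_delta);
  repeat match goal with |- context [coords (delta_mx ?p 0)] =>
    rewrite [coords (delta_mx p 0)]/coords end;
  rewrite ?coord_delta //; coords_generalize.

Section CrossProduct.
Variable R : comNzRingType.
Implicit Types (u v w x y z i a b : 'cV[R]_7).

Lemma icrossC x y : icross x y = - icross y x.
Proof. by coords_expand; ring. Qed.

Lemma icrossxx x : icross x x = 0.
Proof. by coords_expand; ring. Qed.

Lemma icrossDl x y z : icross (x + y) z = icross x z + icross y z.
Proof. by coords_expand; ring. Qed.

Lemma icrossDr x y z : icross x (y + z) = icross x y + icross x z.
Proof. by coords_expand; ring. Qed.

Lemma icrossZl c x y : icross (c *: x) y = c *: icross x y.
Proof. by coords_expand; ring. Qed.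

Lemma icrossZr c x y : icross x (c *: y) = c *: icross x y.
Proof. by coords_expand; ring. Qed.

Lemma icrossNl x y : icross (- x) y = - icross x y.
Proof. by rewrite -scaleN1r icrossZl scaleN1r. Qed.

Lemma icrossNr x y : icross x (- y) = - icross x y.
Proof. by rewrite -scaleN1r icrossZr scaleN1r. Qed.

Lemma icross0r x : icross x 0 = 0.
Proof. by rewrite -(scale0r 0) icrossZr !scale0r. Qed.

Lemma idotC x y : idot x y = idot y x.
Proof. by coords_expand; ring. Qed.

Lemma idotDl x y z : idot (x + y) z = idot x z + idot y z.
Proof. by coords_expand; ring. Qed.

Lemma idotDr x y z : idot x (y + z) = idot x y + idot x z.
Proof. by rewrite idotC idotDl !(idotC x). Qed.

Lemma idotZl c x y : idot (c *: x) y = c * idot x y.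
Proof. by coords_expand; ring. Qed.

Lemma idotZr c x y : idot x (c *: y) = c * idot x y.
Proof. by rewrite idotC idotZl idotC. Qed.

Lemma idotNl x y : idot (- x) y = - idot x y.
Proof. by rewrite -scaleN1r idotZl mulN1r. Qed.

Lemma idotNr x y : idot x (- y) = - idot x y.
Proof. by rewrite -scaleN1r idotZr mulN1r. Qed.

Lemma idotBl x y z : idot (x - y) z = idot x z - idot y z.
Proof. by rewrite idotDl idotNl. Qed.

Lemma idot0r x : idot x 0 = 0.
Proof. by rewrite -(scale0r 0) idotZr mul0r. Qed.

Lemma idot_icrossA x y z : idot (icross x y) z = idot x (icross y z).
Proof. by coords_expand; ring. Qed.

Lemma idot_icross_rot x y z : idot x (icross y z) = idot y (icross z x).
Proof. by rewrite idotC idot_icrossA. Qed.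

Lemma idot_icrossl x y : idot (icross x y) x = 0.
Proof. by coords_expand; ring. Qed.

Lemma idot_icross_icross x y :
  idot (icross x y) (icross x y) = idot x x * idot y y - idot x y ^+ 2.
Proof. by coords_expand; ring. Qed.

Lemma idot_icross3 i a b : idot (icross i (icross (icross i (icross a b)) a)) b =
  idot i i * idot a a * idot b b - idot i i * idot a b ^+ 2
  + 3 * idot a i * idot b i * idot a b - 2 * idot a i ^+ 2 * idot b b
  - idot b i ^+ 2 * idot a a - idot i (icross a b) ^+ 2.
Proof. by coords_expand; ring. Qed.

(* The inner derivation D_{i,a} of the octonions, restricted to Im O. *)
Definition inner_der i a y :=
  icross i (icross a y) - icross a (icross i y) + icross (icross i a) y.

Lemma inner_der_icross i a u v :
  inner_der i a (icross u v) = icross (inner_der i a u) v + icross u (inner_der i a v).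
Proof. by rewrite /inner_der; coords_expand; ring. Qed.

Lemma idot_inner_der i a u v : idot (inner_der i a u) v = - idot u (inner_der i a v).
Proof. by rewrite /inner_der; coords_expand; ring. Qed.

Lemma inner_derE i a b : inner_der i a b =
  icross i (icross a b) - (2 * idot a b) *: i + idot a i *: b + idot b i *: a.
Proof. by rewrite /inner_der; coords_expand; ring. Qed.

Lemma inner_der_id i a : inner_der i a i = (2 * idot i i) *: a - (2 * idot a i) *: i.
Proof. by rewrite /inner_der; coords_expand; ring. Qed.

Lemma inner_der0 i y : inner_der i 0 y = 0.
Proof. by rewrite /inner_der; coords_expand; ring. Qed.

End CrossProduct.

Section SkewDerivations.
Variable R : comNzRingType.
Implicit Types (u v x y a b c : 'cV[R]_7) (A B X Z : 'M[R]_7).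

Definition skew_der X :=
  X^T = - X /\ forall u v, X *m icross u v = icross (X *m u) v + icross u (X *m v).

Lemma idotE u v : idot u v = (u^T *m v) 0 0.
Proof. by rewrite /idot mxE; apply: eq_bigr => k _; rewrite mxE. Qed.

Lemma mulmx_cVP A B : (forall u : 'cV[R]_7, A *m u = B *m u) -> A = B.
Proof.
move=> AB; apply/matrixP => r s.
by have := congr1 (fun M : 'cV_7 => M r 0) (AB (delta_mx s 0)); rewrite -!colE !mxE.
Qed.

Lemma skew_idot X u v : X^T = - X -> idot (X *m u) v = - idot u (X *m v).
Proof. by move=> tX; rewrite !idotE trmx_mul tX mulmxN mulNmx mulmxA mxE. Qed.

Lemma skewP X : (forall u v, idot (X *m u) v = - idot u (X *m v)) -> X^T = - X.
Proof.
move=> sX; apply/matrixP => r s; rewrite !mxE.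
have idot_delta (w : 'cV[R]_7) k : idot w (delta_mx k 0) = w k 0 by rewrite idotE -colE !mxE.
by have := sX (delta_mx r 0) (delta_mx s 0); rewrite idot_delta idotC idot_delta -!colE !mxE.
Qed.

Lemma in_g2P X : in_g2 X <-> skew_der X.
Proof.
split=> [dX | [tX dX] [a u] [b v]].
  have e u v := dX (0, u) (0, v); split.
    apply: skewP => u v; case: (e u v); rewrite !mul0r !sub0r => h _.
    by apply/eqP; rewrite -addr_eq0 -oppr_eq0 opprD -h.
  by move=> u v; case: (e u v) => _; rewrite !scale0r !add0r.
rewrite /omul /oadd /=; congr pair.
  by rewrite (skew_idot _ _ tX) !mulr0 !mul0r; ring.
rewrite !mulmxDr -!scalemxAr dX !scale0r !add0r !addr0.
by coords_linear; ring.
Qed.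

Lemma skew_derD A B : skew_der A -> skew_der B -> skew_der (A + B).
Proof.
move=> [tA dA] [tB dB]; split; first by rewrite linearD /= tA tB opprD.
by move=> u v; rewrite !mulmxDl dA dB icrossDl icrossDr addrACA.
Qed.

Lemma skew_derZ (k : R) A : skew_der A -> skew_der (k *: A).
Proof.
move=> [tA dA]; split; first by rewrite linearZ /= tA scalerN.
by move=> u v; rewrite -!scalemxAl dA icrossZl icrossZr scalerDr.
Qed.

Lemma skew_der_lie A B : skew_der A -> skew_der B -> skew_der (lie A B).
Proof.
move=> [tA dA] [tB dB]; split.
  by rewrite /lie linearB /= !trmx_mul tA tB !mulmxN !mulNmx !opprK opprB.
move=> u v; rewrite /lie !mulmxBl -!mulmxA dB dA !mulmxDr !dA !dB.
by rewrite !(icrossDl, icrossDr, icrossNl, icrossNr); coords_linear; ring.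
Qed.

Lemma skew_der_phi Z a b c : skew_der Z ->
  idot (Z *m a) (icross b c) + idot (Z *m b) (icross c a) + idot (Z *m c) (icross a b) = 0.
Proof.
move=> [tZ dZ]; have := congr1 (fun w => idot w c) (dZ a b).
rewrite /= skew_idot // idotDl (idotC (icross a b)) (idot_icrossA (Z *m a)).
by rewrite (idot_icrossA a) (idot_icross_rot a) => <-; rewrite addNr.
Qed.

Definition Lmul x : 'M[R]_7 := \matrix_(k, j) \sum_i octo_eps R i j k * x i 0.

Lemma LmulE x y : Lmul x *m y = icross x y.
Proof.
apply/matrixP => k c; rewrite [c]ord1 !mxE.
under eq_bigr do rewrite mxE mulr_suml.
by rewrite exchange_big.
Qed.

Lemma Lmul_skew_der Z x : skew_der Z -> Z *m Lmul x - Lmul x *m Z = Lmul (Z *m x).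
Proof.
by move=> [_ dZ]; apply: mulmx_cVP => y; rewrite mulmxBl -!mulmxA !LmulE dZ addrK.
Qed.

Lemma mxtrace_Lmul_mul x y : \tr (Lmul x *m Lmul y) = -6 * idot x y.
Proof. by rewrite mxtrace_coords -!mulmxA !LmulE; coords_expand; ring. Qed.

(* The contraction of Z with the 3-form <u x v, w>. *)
Definition contract Z : 'cV[R]_7 := \sum_(n < 7) icross (delta_mx n 0) (Z *m delta_mx n 0).

Lemma contractN Z : contract (- Z) = - contract Z.
Proof. by rewrite /contract -sumrN; apply: eq_bigr => n _; rewrite mulNmx icrossNr. Qed.

Lemma mxtrace_Lmul x Z : \tr (Lmul x *m Z) = idot x (contract Z^T).
Proof.
rewrite mxtrace_coords -!mulmxA !LmulE /contract big_ord7; coords_expand.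
by rewrite /entry !mxE; ring.
Qed.

End SkewDerivations.

Section LieStructure.
Variable R : comNzRingType.
Implicit Types (i : 'cV[R]_7) (A B C D U Z : 'M[R]_7).

Lemma ip0D A B Z : ip0 (A + B) Z = ip0 A Z + ip0 B Z.
Proof. by rewrite /ip0 mulmxDl mxtraceD opprD. Qed.

Lemma ip0Z (k : R) A Z : ip0 (k *: A) Z = k * ip0 A Z.
Proof. by rewrite /ip0 -scalemxAl mxtraceZ mulrN. Qed.

Lemma ip0_lie Z U Z' : ip0 (lie Z U) Z' = - ip0 U (lie Z Z').
Proof.
rewrite /ip0 /lie opprK mulmxBl mulmxBr !raddfB /= -!mulmxA.
by rewrite [\tr (Z *m _)]mxtrace_mulC -mulmxA opprK addrC.
Qed.

Lemma lieC A B : lie A B = - lie B A.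
Proof. by rewrite /lie opprB. Qed.

Lemma lie_lin_comb (k : R) A B C D :
  lie (k *: A + B) (k *: C + D) = (k * k) *: lie A C + k *: (lie A D + lie B C) + lie B D.
Proof.
rewrite /lie !mulmxDl !mulmxDr -!scalemxAl -!scalemxAr !scalerA.
move: (A *m C) (C *m A) (A *m D) (D *m A) (B *m C) (C *m B) (B *m D) (D *m B)
  => p1 p2 p3 p4 p5 p6 p7 p8.
by apply/matrixP => r s; rewrite !mxE; ring.
Qed.

Lemma in_g2D A B : in_g2 A -> in_g2 B -> in_g2 (A + B).
Proof. by move=> /in_g2P gA /in_g2P gB; apply/in_g2P; apply: skew_derD. Qed.

Lemma in_g2Z (k : R) A : in_g2 A -> in_g2 (k *: A).
Proof. by move=> /in_g2P gA; apply/in_g2P; apply: skew_derZ. Qed.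

Lemma in_g2_lie A B : in_g2 A -> in_g2 B -> in_g2 (lie A B).
Proof. by move=> /in_g2P gA /in_g2P gB; apply/in_g2P; apply: skew_der_lie. Qed.

Lemma in_pD i A B : in_p i A -> in_p i B -> in_p i (A + B).
Proof.
move=> [gA pA] [gB pB]; split; first exact: in_g2D.
by move=> Z kZ; rewrite ip0D pA // pB // addr0.
Qed.

Lemma in_pZ i (k : R) A : in_p i A -> in_p i (k *: A).
Proof.
move=> [gA pA]; split; first exact: in_g2Z.
by move=> Z kZ; rewrite ip0Z pA // mulr0.
Qed.

Lemma in_pN i A : in_p i A -> in_p i (- A).
Proof. by rewrite -scaleN1r; apply: in_pZ. Qed.

Lemma in_k_lie i Z Z' : in_k i Z -> in_k i Z' -> in_k i (lie Z Z').
Proof.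
move=> [gZ Zi] [gZ' Z'i]; split; first exact: in_g2_lie.
by rewrite /lie mulmxBl -!mulmxA Zi Z'i !mulmx0 subr0.
Qed.

Lemma in_p_lie i Z U : in_k i Z -> in_p i U -> in_p i (lie Z U).
Proof.
move=> kZ [gU pU]; split; first by apply: in_g2_lie => //; case: kZ.
by move=> Z' kZ'; rewrite ip0_lie pU ?oppr0 //; apply: in_k_lie.
Qed.

End LieStructure.

Ltac skew_normalize sk :=
  repeat match goal with |- context [?Z (inord ?r) (inord ?s)] =>
    lazymatch eval vm_compute in (s < r)%N with true => rewrite (sk r s) end
  end.

Section G2.
Variable R : realFieldType.
Implicit Types (u v x y i a b : 'cV[R]_7) (A B U V Z : 'M[R]_7).

(* Each coordinate of [contract Z] is -2 times [skew_der_phi] at a Fano triple. *)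
Lemma contract_skew_der Z : skew_der Z -> contract Z = 0.
Proof.
move=> dZ; have [tZ _] := dZ.
have sk r s : Z (inord r) (inord s) = - Z (inord s) (inord r).
  by have := congr1 (fun M : 'M_7 => M (inord s) (inord r)) tZ; rewrite !mxE.
pose fano p q r := skew_der_phi (delta_mx (inord p) 0) (delta_mx (inord q) 0)
  (delta_mx (inord r) 0) dZ.
apply: coords_inj; rewrite /contract big_ord7; coords_expand;
  [> move: (fano 3 2 4) | move: (fano 4 3 5) | move: (fano 5 4 6) | move: (fano 6 5 0)
   | move: (fano 0 6 1) | move: (fano 1 0 2) | move: (fano 2 1 3)].
all: coords_expand.
all: by rewrite /entry; skew_normalize sk; lra.
Qed.

Lemma mxtrace_Lmul_skew_der x Z : skew_der Z -> \tr (Lmul x *m Z) = 0.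
Proof.
move=> dZ; have [tZ _] := dZ.
by rewrite mxtrace_Lmul tZ contractN (contract_skew_der dZ) oppr0 idot0r.
Qed.

(* The derivation (1/2) D_{i,a}; it spans p when i is a unit vector. *)
Definition pmx i a : 'M[R]_7 :=
  2^-1 *: (Lmul i *m Lmul a - Lmul a *m Lmul i + Lmul (icross i a)).

Lemma pmxE i a y : pmx i a *m y = 2^-1 *: inner_der i a y.
Proof. by rewrite /pmx -scalemxAl mulmxDl mulmxBl -!mulmxA !LmulE. Qed.

Lemma skew_der_pmx i a : skew_der (pmx i a).
Proof.
split; first by apply: skewP => u v; rewrite !pmxE idotZl idotZr idot_inner_der mulrN.
by move=> u v; rewrite !pmxE inner_der_icross scalerDr -icrossZl -icrossZr.
Qed.

Lemma pmx0 i : pmx i 0 = 0.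
Proof. by apply: mulmx_cVP => y; rewrite pmxE inner_der0 scaler0 mul0mx. Qed.

Lemma pmx_id i a : idot i i = 1 -> idot a i = 0 -> pmx i a *m i = a.
Proof.
move=> ii ai; rewrite pmxE inner_der_id ii ai mulr0 scale0r subr0 mulr1 scalerA.
by rewrite mulVf ?scale1r // pnatr_eq0.
Qed.

Lemma mxtrace_pmx_mul i a Z : skew_der Z -> \tr (pmx i a *m Z) = 3 * idot i (Z *m a).
Proof.
move=> dZ; rewrite /pmx -scalemxAl mxtraceZ mulmxDl mulmxBl mxtraceD raddfB /=.
rewrite mxtrace_Lmul_skew_der // addr0.
have -> : \tr (Lmul a *m Lmul i *m Z) = \tr (Lmul i *m Z *m Lmul a).
  by rewrite -mulmxA mxtrace_mulC.
rewrite -raddfB /= -!mulmxA -mulmxBr -[Lmul a *m Z - _]opprB (Lmul_skew_der _ dZ).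
by rewrite mulmxN raddfN /= mxtrace_Lmul_mul; field.
Qed.

Lemma mxtrace_mul_trmx_eq0 m n (Z : 'M[R]_(m, n)) : \tr (Z *m Z^T) = 0 -> Z = 0.
Proof.
have rowE r : (Z *m Z^T) r r = \sum_j Z r j * Z r j.
  by rewrite mxE; apply: eq_bigr => j _; rewrite mxE.
have sq_ge0 (x : R) : 0 <= x * x by rewrite -expr2 sqr_ge0.
have row_ge0 r : true -> 0 <= (Z *m Z^T) r r.
  by move=> _; rewrite rowE; apply: sumr_ge0 => j _; apply: sq_ge0.
move=> trZ; apply/matrixP => r s; rewrite mxE.
have := psumr_eq0P row_ge0 trZ (i := r) isT; rewrite rowE => row0.
have /eqP := psumr_eq0P (fun j _ => sq_ge0 (Z r j)) row0 (i := s) isT.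
by rewrite mulf_eq0 orbb => /eqP.
Qed.

Lemma idot_ge0 u : 0 <= idot u u.
Proof. by apply: sumr_ge0 => k _; rewrite -expr2 sqr_ge0. Qed.

Lemma idot_eq0 u : idot u u = 0 -> u = 0.
Proof.
move=> uu; apply: trmx_inj; rewrite trmx0; apply: mxtrace_mul_trmx_eq0.
by rewrite trmxK /mxtrace big_ord1 -idotE.
Qed.

Lemma in_k_in_p_eq0 i Z : in_k i Z -> in_p i Z -> Z = 0.
Proof.
move=> kZ [_ pZ]; have [/in_g2P [tZ _] _] := kZ.
by apply: mxtrace_mul_trmx_eq0; rewrite tZ mulmxN raddfN /=; apply: pZ.
Qed.

Lemma pmx_in_p i a : in_p i (pmx i a).
Proof.
split; first by apply/in_g2P; apply: skew_der_pmx.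
move=> Z [/in_g2P dZ Zi]; have [tZ _] := dZ.
rewrite /ip0 mxtrace_pmx_mul // -[idot i _]opprK -skew_idot // Zi.
by rewrite idotC idot0r oppr0 mulr0 oppr0.
Qed.

Lemma in_p_orth i U : in_p i U -> idot (U *m i) i = 0.
Proof.
move=> [/in_g2P [tU _] _]; have := skew_idot i i tU.
by rewrite (idotC i); lra.
Qed.

Lemma in_pE i U : idot i i = 1 -> in_p i U -> U = pmx i (U *m i).
Proof.
move=> ii pU; have pD := in_pD pU (in_pN (pmx_in_p i (U *m i))).
apply/eqP; rewrite -subr_eq0; apply/eqP; apply: (in_k_in_p_eq0 _ pD).
split; first by case: pD.
by rewrite mulmxBl pmx_id ?subrr // in_p_orth.
Qed.

Lemma lie_in_p_eq0 i U V :
  idot i i = 1 -> in_p i U -> in_p i V -> in_p i (lie U V) -> lie U V = 0.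
Proof.
move=> ii pU pV pW.
have [/in_g2P [tU _] _] := pU; have [/in_g2P [tV _] _] := pV.
set a := U *m i; set b := V *m i; set n := icross i (icross a b).
have ai : idot a i = 0 := in_p_orth pU.
have bi : idot b i = 0 := in_p_orth pV.
have ni : idot n i = 0 by rewrite /n idot_icrossl.
have eU : U = pmx i a := in_pE ii pU.
have eV : V = pmx i b := in_pE ii pV.
have Ua : U *m a = - (idot a a *: i).
  by rewrite eU pmxE inner_derE ai icrossxx icross0r; coords_linear; field.
have Ub : U *m b = 2^-1 *: n - idot a b *: i.
  by rewrite eU pmxE inner_derE ai bi; coords_linear; field.
have Va : V *m a = - (2^-1 *: n) - idot a b *: i.
  rewrite eV pmxE inner_derE ai bi (idotC b) (icrossC b) icrossNr.
  by coords_linear; field.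
have Vb : V *m b = - (idot b b *: i).
  by rewrite eV pmxE inner_derE bi icrossxx icross0r; coords_linear; field.
have W_pmx : lie U V = pmx i n.
  rewrite (in_pE ii pW) /lie mulmxBl -!mulmxA -/a -/b Ub Va.
  by congr pmx; coords_linear; field.
have Wab : idot (lie U V *m a) b = 4^-1 * idot n n + idot a a * idot b b - idot a b ^+ 2.
  rewrite /lie mulmxBl idotBl -!mulmxA (skew_idot (V *m a) b tU) (skew_idot (U *m a) b tV).
  rewrite Va Ub Ua Vb.
  rewrite !(idotDl, idotDr, idotNl, idotNr, idotZl, idotZr) (idotC i n) ni ii.
  by field.
have Wab' : idot (pmx i n *m a) b =
    2^-1 * (idot a a * idot b b - idot a b ^+ 2 - idot i (icross a b) ^+ 2).
  rewrite pmxE idotZl inner_derE !(idotDl, idotNl, idotZl) (idotC i b) bi ni ai.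
  by rewrite /n idot_icross3 ai bi ii; field.
have nn : idot n n = idot (icross a b) (icross a b) - idot i (icross a b) ^+ 2.
  by rewrite /n idot_icross_icross ii mul1r.
have ab0 : idot (icross a b) (icross a b) = 0.
  have := idot_ge0 (icross a b); have := sqr_ge0 (idot i (icross a b)).
  by move: Wab; rewrite W_pmx Wab' nn idot_icross_icross; lra.
by rewrite W_pmx /n (idot_eq0 ab0) icross0r pmx0.
Qed.

End G2.

Unset Implicit Arguments.

Theorem mainTheorem8 (R : rcfType) (t : R) (ht : 0 < t) (i : 'cV[R]_7)
  (hi : idot i i = 1)
  (X Y Xk Xp Yk Yp : 'M[R]_7)
  (hX : in_g2 X) (hY : in_g2 Y)
  (hXd : kp_decomp i X Xk Xp) (hYd : kp_decomp i Y Yk Yp) :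
  (lie (phi t Xk Xp) (phi t Yk Yp) = 0 /\ lie Xk Yk = 0) <->
  (lie X Y = 0 /\ lie Xp Yp = 0).
Proof.
case: hXd => -> [kXk pXp]; case: hYd => -> [kYk pYp].
set s := t / (t + 1).
have s_neq0 : s != 0 by apply: lt0r_neq0; rewrite divr_gt0 //; lra.
set M := lie Xk Yp + lie Xp Yk.
have pM : in_p i M.
  by rewrite /M (lieC Xp); apply: in_pD (in_p_lie kXk pYp) (in_pN (in_p_lie kYk pXp)).
have -> : lie (Xk + Xp) (Yk + Yp) = lie Xk Yk + M + lie Xp Yp.
  by have := lie_lin_comb 1 Xk Xp Yk Yp; rewrite mulr1 !scale1r.
rewrite /phi -/s lie_lin_comb -/M.
split=> [[sum0 kk0] | [sum0 pp0]].
- rewrite kk0 scaler0 add0r in sum0.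
  have pp0 : lie Xp Yp = 0.
    apply: lie_in_p_eq0 hi pXp pYp _.
    by rewrite -[lie Xp Yp](addKr (s *: M)) sum0 addr0; apply/in_pN/in_pZ.
  have M0 : M = 0.
    by move: sum0; rewrite pp0 addr0 => /eqP; rewrite scaler_eq0 (negbTE s_neq0) => /eqP.
  by rewrite kk0 M0 pp0 !addr0.
- rewrite pp0 addr0 in sum0.
  have kk0 : lie Xk Yk = 0.
    apply: (@in_k_in_p_eq0 _ i); first exact: in_k_lie.
    by rewrite -[lie Xk Yk](addrK M) sum0 sub0r; apply: in_pN.
  by rewrite kk0 add0r in sum0; rewrite kk0 sum0 pp0 !scaler0 !addr0.
Qed.
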